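(* Let $\mathcal{A}=\mathbb{C}[x,y]$ and consider the complex $0\to\mathcal{A}\xrightarrow{d^0}\mathcal{A}\times\mathcal{A}\xrightarrow{d^1}\mathcal{A}\to0$ with $d^0(f)=(x\partial_yf,\,-x^2\partial_xf)$ and $d^1(f_1,f_2)=x\partial_yf_2+x^2\partial_xf_1-xf_1$ (the logarithmic Poisson complex of the bracket $\{x,y\}=x^2$ along $x^2\mathcal{A}$). Its cohomology satisfies $H^0_{PS}\cong\mathbb{C}$, $H^1_{PS}\cong\mathbb{C}[y]\oplus\mathbb{C}_1[x]$, $H^2_{PS}\cong\mathbb{C}[y]$, where $\mathbb{C}_1[x]=\{a_0+a_1x:\ a_0,a_1\in\mathbb{C}\}$. *)

From HB Require Import structures.
From mathcomp Require Import all_boot all_order all_algebra.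
Set Implicit Arguments. Unset Strict Implicit. Unset Printing Implicit Defensive.
Import Order.TTheory GRing.Theory Num.Theory.
Local Open Scope ring_scope.

(* The polynomial ring A = F[x,y] is represented as {poly {poly F}}:
   polynomials in the (outer) variable y whose coefficients are polynomials
   in the (inner) variable x. *)
Definition bipoly (F : fieldType) := {poly {poly F}}.

Definition xA (F : fieldType) : {poly {poly F}} := ('X : {poly F})%:P.

Definition dX (F : fieldType) (p : {poly {poly F}}) : {poly {poly F}} :=
  map_poly (@deriv _) p.
Definition dY (F : fieldType) (p : {poly {poly F}}) : {poly {poly F}} :=
  deriv p.

Definition scA (F : fieldType) (c : F) (p : {poly {poly F}}) : {poly {poly F}} :=
  c%:P%:P * p.
Definition scAA (F : fieldType) (c : F) (u : {poly {poly F}} * {poly {poly F}}) :=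
  (scA c u.1, scA c u.2).
Definition scPP (F : fieldType) (c : F) (u : {poly F} * {poly F}) :=
  (c *: u.1, c *: u.2).

Definition d0 (F : fieldType) (f : {poly {poly F}}) :=
  (xA F * dY f, - (xA F ^+ 2 * dX f)).
Definition d1 (F : fieldType) (u : {poly {poly F}} * {poly {poly F}}) :
  {poly {poly F}} :=
  xA F * dY u.2 + xA F ^+ 2 * dX u.1 - xA F * u.1.

(* [quot_iso sV sW Z B T]: the quotient Z / B (Z, B subspaces of V, B inside Z)
   is F-linearly isomorphic to the subspace T of W; expressed via the first
   isomorphism theorem: there is an F-linear map Z -> W with image exactly T
   and kernel exactly B. *)
Definition quot_iso (F : fieldType) (V W : zmodType)
  (sV : F -> V -> V) (sW : F -> W -> W)
  (Z B : V -> Prop) (T : W -> Prop) : Prop :=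
  exists phi : V -> W,
    [/\ (forall u v, Z u -> Z v -> phi (u + v) = phi u + phi v),
        (forall c u, Z u -> phi (sV c u) = sW c (phi u)),
        (forall u, Z u -> T (phi u)),
        (forall w, T w -> exists u, Z u /\ phi u = w) &
        (forall u, Z u -> (phi u = 0 <-> B u))].

(* Everything follows from the factorisation d1(u1, u2) = x (dY u2 + x dX u1 - u1)
   together with integration in y and in x, available in characteristic 0.
   A 0-cocycle has dY f = dX f = 0, hence is a constant.  The image of d1 is
   exactly the ideal x A, so H^2 = A / x A, read off by setting x = 0.  A
   1-cocycle u with u1(0, y) = 0 is u1 = x Q; then dY u2 + x^2 dX Q = 0, so with
   P an y-primitive of Q the element u2 + x^2 dX P depends on x only and equals
   u2(x, 0).  If moreover u2(x, 0) has no terms of x-degree < 2, it is x^2 k(x),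
   and u = d0 (P - h) for h an x-primitive of k.  Hence the class of u is
   measured by u1(0, y) and the part of u2(x, 0) of x-degree < 2. *)
From HB Require Import structures.
From mathcomp Require Import all_boot all_order all_algebra.
Import GRing.Theory.
Local Open Scope ring_scope.

Section Antiderivative.
Context {R : unitRingType}.
Hypothesis natr_unit : forall n : nat, n.+1%:R \is a @GRing.unit R.

Lemma deriv_eq0_const (p : {poly R}) : p^`() = 0 -> p = (p`_0)%:P.
Proof.
move=> dp0; apply/polyP => -[|j]; rewrite coefC //=.
have := congr1 (coefp j) dp0; rewrite /= coef_deriv coef0 -mulr_natr.
by move=> /(congr1 (fun z => z * j.+1%:R^-1)); rewrite -mulrA mulrV // mulr1 mul0r.
Qed.

Definition antideriv (q : {poly R}) : {poly R} :=
  \poly_(i < (size q).+1) (q`_i.-1 * i%:R^-1).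

Lemma antiderivK (q : {poly R}) : (antideriv q)^`() = q.
Proof.
apply/polyP => j; rewrite coef_deriv coef_poly ltnS.
case: ltnP => [_ | le_q_j] /=; first by rewrite -[_ *+ _]mulr_natr -mulrA mulVr ?mulr1.
by rewrite mul0rn nth_default.
Qed.

Lemma coef0_antideriv (q : {poly R}) : (antideriv q)`_0 = 0.
Proof. by rewrite coef_poly /= invr0 mulr0. Qed.

End Antiderivative.

Section BivariateCalculus.
Context {F : fieldType}.

Lemma xA_neq0 : xA F != 0.
Proof. by rewrite polyC_eq0 polyX_eq0. Qed.

Lemma coef_xAM (p : {poly {poly F}}) j : (xA F * p)`_j = 'X * p`_j.
Proof. exact: coefCM. Qed.

Lemma coef_xA2M (p : {poly {poly F}}) j : (xA F ^+ 2 * p)`_j = 'X^2 * p`_j.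
Proof. by rewrite /xA -rmorphXn coefCM. Qed.

Lemma coef_dX (p : {poly {poly F}}) j : (dX p)`_j = (p`_j)^`().
Proof. by rewrite coef_map_id0 ?deriv0. Qed.

Lemma dX_polyC (c : {poly F}) : dX c%:P = (c^`())%:P.
Proof. exact: map_polyC. Qed.

Lemma dX_constant (c : F) : dX c%:P%:P = 0.
Proof. by rewrite dX_polyC derivC. Qed.

Lemma dX_map_polyC (c : {poly F}) : dX (map_poly polyC c) = 0.
Proof. by apply/polyP => j; rewrite coef_dX coef_map_id0 // derivC coef0. Qed.

Lemma dXB (p q : {poly {poly F}}) : dX (p - q) = dX p - dX q.
Proof. by apply/polyP => j; rewrite coefB !coef_dX coefB derivB. Qed.

Lemma dX_xAM (p : {poly {poly F}}) : dX (xA F * p) = p + xA F * dX p.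
Proof.
by apply/polyP => j; rewrite coef_dX coefD !coef_xAM coef_dX derivM derivX mul1r.
Qed.

Lemma dY_xA2M (p : {poly {poly F}}) : dY (xA F ^+ 2 * p) = xA F ^+ 2 * dY p.
Proof. by apply/polyP => j; rewrite coef_deriv !coef_xA2M coef_deriv mulrnAr. Qed.

Lemma dY_dX (p : {poly {poly F}}) : dY (dX p) = dX (dY p).
Proof. by apply/polyP => j; rewrite coef_deriv !coef_dX coef_deriv derivMn. Qed.

Lemma d1_factor (u : {poly {poly F}} * {poly {poly F}}) :
  d1 u = xA F * (dY u.2 + xA F * dX u.1 - u.1).
Proof. by rewrite /d1 mulrBr mulrDr expr2 mulrA. Qed.

Definition restr_x0 (p : {poly {poly F}}) : {poly F} := map_poly (coefp 0) p.

Lemma coef_restr_x0 (p : {poly {poly F}}) j : (restr_x0 p)`_j = (p`_j)`_0.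
Proof. by rewrite coef_map_id0 ?raddf0. Qed.

Lemma restr_x0D (p q : {poly {poly F}}) :
  restr_x0 (p + q) = restr_x0 p + restr_x0 q.
Proof. exact: raddfD. Qed.

Lemma restr_x0_scale (c : F) (p : {poly {poly F}}) :
  restr_x0 (scA c p) = c *: restr_x0 p.
Proof. by apply/polyP => j; rewrite coefZ !coef_restr_x0 !coefCM. Qed.

Lemma restr_x0_map_polyC (c : {poly F}) : restr_x0 (map_poly polyC c) = c.
Proof. by apply/polyP => j; rewrite coef_restr_x0 coef_map_id0 // coefC. Qed.

Lemma restr_x0_xAM (p : {poly {poly F}}) : restr_x0 (xA F * p) = 0.
Proof. by apply/polyP => j; rewrite coef_restr_x0 coef_xAM coefXM coef0. Qed.

Lemma restr_x0_eq0 (p : {poly {poly F}}) :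
  restr_x0 p = 0 -> p = xA F * map_poly (drop_poly 1) p.
Proof.
move=> p0; apply/polyP => j; rewrite coef_xAM coef_map_id0 ?drop_poly0r //.
apply/polyP => -[|i]; rewrite coefXM coef_drop_poly ?addn1 //=.
by rewrite -coef_restr_x0 p0 !coef0.
Qed.

End BivariateCalculus.

Section Cohomology.
Variable F : fieldType.
Hypothesis hF : [pchar F] =i pred0.

Lemma pchar0_natr_unit n : n.+1%:R \is a @GRing.unit F.
Proof. by rewrite unitfE ((pcharf0P _).1 hF). Qed.

Lemma pchar0_natr_unit_poly n : n.+1%:R \is a @GRing.unit {poly F}.
Proof.
rewrite poly_unitE -polyC_natr size_polyC coefC /= pchar0_natr_unit andbT.
by rewrite ((pcharf0P _).1 hF).
Qed.

Lemma d0_eq0 (f : {poly {poly F}}) : d0 f = 0 -> f = ((f`_0)`_0)%:P%:P.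
Proof.
move=> /(congr1 (fun u => (u.1, - u.2))) /=; rewrite opprK oppr0 => -[/eqP + /eqP].
rewrite !mulf_eq0 (negbTE xA_neq0) /=.
move=> /eqP /(deriv_eq0_const pchar0_natr_unit_poly) -> /eqP /(congr1 (coefp 0)).
by rewrite /= coef_dX coef0 coefC => /(deriv_eq0_const pchar0_natr_unit) <-.
Qed.

Lemma H0_iso : quot_iso (@scA F) (fun c (a : F) => c * a)
  (fun f => d0 f = 0) (fun f => f = 0) (fun _ => True).
Proof.
exists (fun f : {poly {poly F}} => (f`_0)`_0); split => //.
- by move=> u v _ _; rewrite !coefD.
- by move=> c u _; rewrite !coefCM.
- move=> a _; exists a%:P%:P; rewrite !coefC; split => //.
  by rewrite /d0 dX_constant /dY derivC !mulr0 oppr0.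
- move=> f /d0_eq0 f_const; split => [f00 | ->]; last by rewrite !coef0.
  by rewrite f_const f00.
Qed.

Lemma im_d1 (g : {poly {poly F}}) : (exists u, g = d1 u) <-> restr_x0 g = 0.
Proof.
split=> [[u ->] | /restr_x0_eq0 ->]; first by rewrite d1_factor restr_x0_xAM.
exists (0, antideriv (map_poly (drop_poly 1) g)).
by rewrite /d1 /dY (antiderivK pchar0_natr_unit_poly) dX_constant !mulr0 subr0 addr0.
Qed.

Lemma H2_iso : quot_iso (@scA F) (fun c (p : {poly F}) => c *: p)
  (fun _ => True) (fun g => exists u, g = d1 u) (fun _ => True).
Proof.
exists restr_x0; split => //.
- by move=> u v _ _; exact: restr_x0D.
- by move=> c u _; exact: restr_x0_scale.
- by move=> w _; exists (map_poly polyC w); rewrite restr_x0_map_polyC.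
- by move=> g _; apply: iff_sym; exact: im_d1.
Qed.

(* [u.2`_0] is u2(x, 0); its truncation keeps the x-degree < 2 part. *)
Definition H1_class (u : {poly {poly F}} * {poly {poly F}}) :=
  (restr_x0 u.1, take_poly 2 u.2`_0).

Lemma H1_class_d0 (f : {poly {poly F}}) : H1_class (d0 f) = 0.
Proof.
rewrite /H1_class /= restr_x0_xAM coefN coef_xA2M mulrC.
by rewrite -mulNr take_polyMXn_0.
Qed.

Lemma H1_class_eq0 (u : {poly {poly F}} * {poly {poly F}}) :
  d1 u = 0 -> H1_class u = 0 -> exists f, u = d0 f.
Proof.
case: u => u1 u2 /=; rewrite d1_factor => /eqP; rewrite mulf_eq0 (negbTE xA_neq0) /=.
move=> /eqP cocycle [/restr_x0_eq0 u1E low_u2].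
move: (map_poly _ u1) u1E => Q u1E; rewrite {}u1E in cocycle *.
pose P := antideriv Q.
have dYP : dY P = Q := antiderivK pchar0_natr_unit_poly Q.
have eqQ : dY u2 + xA F ^+ 2 * dX Q = 0.
  by rewrite -cocycle dX_xAM mulrDr expr2 mulrA addrCA [RHS]addrC addKr.
have u2E : u2 + xA F ^+ 2 * dX P = (u2`_0)%:P.
  have dY0 : dY (u2 + xA F ^+ 2 * dX P) = 0.
    by rewrite -eqQ -dYP -dY_dX -dY_xA2M; exact: derivD.
  rewrite {1}(deriv_eq0_const pchar0_natr_unit_poly _ dY0) coefD coef_xA2M coef_dX.
  by rewrite coef0_antideriv deriv0 mulr0 addr0.
pose k := drop_poly 2 u2`_0.
have u20E : u2`_0 = 'X^2 * k by rewrite mulrC -{1}(poly_take_drop 2 u2`_0) low_u2 add0r.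
exists (P - (antideriv k)%:P); rewrite /d0; congr (_, _).
  by rewrite -[Q]dYP /dY derivB derivC subr0.
rewrite dXB dX_polyC (antiderivK pchar0_natr_unit) mulrBr opprB /xA -rmorphXn -polyCM -u20E /=.
by rewrite -u2E rmorphXn addrK.
Qed.

Lemma H1_iso : quot_iso (@scAA F) (@scPP F)
  (fun u => d1 u = 0) (fun u => exists f, u = d0 f)
  (fun w => (size w.2 <= 2)%N).
Proof.
exists H1_class; split.
- by move=> [u1 u2] [v1 v2] _ _; rewrite /H1_class /= restr_x0D coefD take_polyD.
- move=> c [u1 u2] _; rewrite /H1_class /scPP /= restr_x0_scale.
  by rewrite coefCM mul_polyC take_polyZ.
- by move=> u _; exact: size_take_poly.
- move=> [c g] /= size_g.
  exists (map_poly polyC c, antideriv (map_poly polyC c) + g%:P); split.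
    rewrite /d1 /= dX_map_polyC /dY derivD (antiderivK pchar0_natr_unit_poly) derivC.
    by rewrite addr0 mulr0 addr0 subrr.
  rewrite /H1_class /= restr_x0_map_polyC coefD coef0_antideriv coefC add0r.
  by rewrite take_poly_id.
- move=> u cocycle; split; first exact: H1_class_eq0.
  by case=> f ->; exact: H1_class_d0.
Qed.

End Cohomology.

Theorem proposition3p2 (F : fieldType) (hF : [pchar F] =i pred0) :
  quot_iso (@scA F) (fun c (a : F) => c * a)
    (fun f => d0 f = 0) (fun f => f = 0) (fun _ => True)
  /\
  quot_iso (@scAA F) (@scPP F)
    (fun u => d1 u = 0) (fun u => exists f, u = d0 f)
    (fun w => (size w.2 <= 2)%N)
  /\
  quot_iso (@scA F) (fun c (p : {poly F}) => c *: p)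
    (fun _ => True) (fun g => exists u, g = d1 u) (fun _ => True).
Proof. by split; [exact: H0_iso | split; [exact: H1_iso | exact: H2_iso]]. Qed.
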